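(* Let $G$ be a word-representable graph. Then $l(G \,\square\, K_2) \le 2\,l(G) + 3|G| - 2$.
   Context: All graphs are simple and undirected; $|G|$ denotes the number of vertices of $G$ and $K_n$ is the complete graph on $n$ vertices. Letters $x,y$ alternate in a word $w$ if deleting all other letters from $w$ yields $xyxy\ldots$ or $yxyx\ldots$ (of either parity). A word $w$ over $V(G)$ represents $G$ if every vertex occurs in $w$ and for all distinct $x,y$, $xy\in E(G)$ iff $x,y$ alternate in $w$; $G$ is word-representable if such a word exists, and $l(G)$ is the minimum length of a word representing $G$. The Cartesian product $G\,\square\,H$ has vertex set $V(G)\times V(H)$, with $(u,v)$ adjacent to $(u',v')$ iff either $u=u'$ and $vv'\in E(H)$, or $v=v'$ and $uu'\in E(G)$. *)

From mathcomp Require Import all_boot.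
Set Implicit Arguments. Unset Strict Implicit. Unset Printing Implicit Defensive.

Definition simple_graph (T : finType) (e : rel T) : Prop :=
  symmetric e /\ irreflexive e.

(* x and y alternate in w: after deleting all letters other than x and y,
   no two consecutive letters are equal (i.e. the result is xyxy... or yxyx...). *)
Definition alternate (T : eqType) (w : seq T) (x y : T) : bool :=
  sorted (fun a b => a != b) [seq z <- w | (z == x) || (z == y)].

Definition represents (T : finType) (e : rel T) (w : seq T) : Prop :=
  (forall x : T, x \in w) /\
  (forall x y : T, x != y -> (e x y <-> alternate w x y)).

Definition word_representable (T : finType) (e : rel T) : Prop :=
  exists w, represents e w.

Definition is_min_word_length (T : finType) (e : rel T) (n : nat) : Prop :=
  (exists w, represents e w /\ size w = n) /\
  (forall w, represents e w -> n <= size w).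

Definition complete_graph (n : nat) : rel 'I_n := fun i j => i != j.
Arguments complete_graph n : clear implicits.

Definition cartesian_product (T1 T2 : finType) (e1 : rel T1) (e2 : rel T2)
  : rel (T1 * T2)%type :=
  fun p q => ((p.1 == q.1) && e2 p.2 q.2) || ((p.2 == q.2) && e1 p.1 q.1).

From mathcomp Require Import all_boot zify.
From Stdlib Require Import Classical Wf_nat.
Set Implicit Arguments. Unset Strict Implicit. Unset Printing Implicit Defensive.

(* Let w represent G and let p list the vertices of G in the order of their
   first occurrences in w.  Writing x0, x1 for the two copies (x, 0), (x, 1)
   of a vertex x, the word
     [x1 x0 for x in p minus its first letter] [x1 for x in p] [x0 x1 for x in w]
   has length 2 |w| + 3 |G| - 2 and represents G □ K2.  The copies of one
   vertex read 1 0 1 0 ...  For distinct u, v the first block restricted to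
   {u, v} ends with the later of u, v in p while the restriction of w starts
   with the earlier one.  Hence on one level the restriction alternates iff
   that of w does, whereas across levels the lone letter v1 of the middle
   block repeats one of its neighbours. *)

Notation alternating := (sorted (fun x y => x != y)).

Section FirstOccurrences.
Variable T : eqType.
Implicit Types (a b u v : T) (s t : seq T).

(* [undup] keeps the last occurrence of each letter. *)
Definition first_occ s := rev (undup (rev s)).

Lemma mem_first_occ s : first_occ s =i s.
Proof. by move=> x; rewrite mem_rev mem_undup mem_rev. Qed.

Lemma first_occ_uniq s : uniq (first_occ s).
Proof. by rewrite rev_uniq undup_uniq. Qed.

Lemma filter_first_occ (P : pred T) s :
  filter P (first_occ s) = first_occ (filter P s).
Proof. by rewrite /first_occ filter_rev filter_undup filter_rev. Qed.

Lemma first_occ_cons a s :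
  first_occ (a :: s) = a :: filter (predC1 a) (first_occ s).
Proof. by rewrite /first_occ rev_cons undup_rcons rev_rcons filter_rev. Qed.

Lemma first_occ_pair a b t :
  a != b -> b \in t -> {subset t <= [:: a; b]} -> first_occ (a :: t) = [:: a; b].
Proof.
move=> ab bt tab; rewrite first_occ_cons.
rewrite -(filter_pred1_uniq (first_occ_uniq t)) ?mem_first_occ //.
congr [:: _ & _]; apply: eq_in_filter => x; rewrite mem_first_occ => /tab.
by rewrite !inE => /pred2P[]->; rewrite eqxx ?(negbTE ab) // eq_sym.
Qed.

Lemma filter_pred2_first_occ u v s a t :
  u != v -> u \in s -> v \in s -> filter (pred2 u v) s = a :: t ->
  exists2 b, b != a & filter (pred2 u v) (first_occ s) = [:: a; b].
Proof.
move=> uv us vs uv_s; rewrite filter_first_occ uv_s.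
have uv_at : {subset a :: t <= [:: u; v]}.
  by move=> x; rewrite -uv_s mem_filter !inE => /andP[].
have [u_at v_at] : u \in a :: t /\ v \in a :: t.
  by split; rewrite -uv_s mem_filter /= eqxx ?orbT ?us ?vs.
have /uv_at := mem_head a t; rewrite !inE => /pred2P[] a_eq; subst a.
- exists v; first by rewrite eq_sym.
  apply: first_occ_pair; first by [].
    by move: v_at; rewrite inE eq_sym (negbTE uv).
  by move=> x xt; apply: uv_at; rewrite inE xt orbT.
- exists u; first by [].
  apply: first_occ_pair; first by rewrite eq_sym.
    by move: u_at; rewrite inE (negbTE uv).
  by move=> x xt; have := uv_at x; rewrite !inE xt orbT orbC => ->.
Qed.

End FirstOccurrences.

Lemma filter_behead (T : Type) (P : pred T) s :
  filter P (behead s) = filter P s \/ filter P (behead s) = behead (filter P s).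
Proof. by case: s => [|x s] /=; [left | case: (P x); [right | left]]. Qed.

Lemma alternateE (T : eqType) (w : seq T) x y :
  alternate w x y = alternating (filter (pred2 x y) w).
Proof. by []. Qed.

Lemma alternate_sym (T : eqType) (w : seq T) x y :
  alternate w x y = alternate w y x.
Proof.
by rewrite !alternateE; congr sorted; apply: eq_filter => z; rewrite /= orbC.
Qed.

Lemma alternating_map (T1 T2 : eqType) (f : T1 -> T2) s :
  injective f -> alternating (map f s) = alternating s.
Proof. by move=> f_inj; rewrite sorted_map; apply: eq_sorted => x y; rewrite /= inj_eq. Qed.

Lemma alternating_repeat (T : eqType) s1 s2 (x : T) :
  alternating (s1 ++ x :: x :: s2) = false.
Proof.
elim: s1 => [|y s1 IH] /=; first by rewrite eqxx.
by apply/negbTE; apply: contraFN IH => /path_sorted.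
Qed.

Section Junction.
Variables (T : eqType) (a b : T) (q : seq T).
Hypotheses (ab : a != b) (q_ab : q = [:: a; b] \/ q = [:: b]).

Lemma alternating_junction t : alternating (q ++ a :: t) = alternating (a :: t).
Proof. by case: q_ab => -> /=; rewrite (eq_sym b) ab. Qed.

Lemma alternating_junction_repeat c t :
  c \in [:: a; b] -> alternating (q ++ c :: a :: t) = false.
Proof.
rewrite !inE => /pred2P[] ->; first exact: alternating_repeat.
by case: q_ab => ->;
  [apply: (alternating_repeat [:: a]) | apply: (alternating_repeat [::])].
Qed.

End Junction.

Lemma ord2P (k : 'I_2) : k = ord0 \/ k = ord_max.
Proof. by case: k => [[|[|m]] lt_k] //; [left | right]; apply: val_inj. Qed.

Section PrismWord.
Variable T : finType.
Implicit Types (u v x : T) (w s : seq T) (i j k : 'I_2).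

Definition twins k1 k2 s : seq (T * 'I_2) :=
  flatten [seq [:: (x, k1); (x, k2)] | x <- s].

Definition prism_word w : seq (T * 'I_2) :=
  twins ord_max ord0 (behead (first_occ w)) ++
  [seq (x, ord_max) | x <- first_occ w] ++ twins ord0 ord_max w.

Lemma size_twins k1 k2 s : size (twins k1 k2 s) = 2 * size s.
Proof. by elim: s => //= x s IH; rewrite IH mulnS. Qed.

Lemma size_prism_word w : (forall x, x \in w) ->
  size (prism_word w) = 2 * size w + 3 * #|T| - 2.
Proof.
move=> w_full; have size_occ : size (first_occ w) = #|T|.
  rewrite -(card_uniqP (first_occ_uniq w)).
  by apply: eq_card => x; rewrite mem_first_occ w_full.
rewrite !size_cat !size_twins size_map size_behead size_occ.
have : size w = 0 \/ 0 < #|T|.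
  by case: w {w_full size_occ} => [|x w]; [left | right; apply/card_gt0P; exists x].
lia.
Qed.

Lemma mem_prism_word w x k : x \in w -> (x, k) \in prism_word w.
Proof.
move=> xw; rewrite !mem_cat; apply/or3P/Or33/flatten_mapP.
by exists x => //; case: (ord2P k) => ->; rewrite !inE eqxx ?orbT.
Qed.

Lemma filter_twins_pair u v i j k1 k2 s : u != v -> k1 != k2 ->
  filter (pred2 (u, i) (v, j)) (twins k1 k2 s) =
  [seq (x, if x == u then i else j) | x <- filter (pred2 u v) s].
Proof.
move=> uv k12; elim: s => //= x s IH; rewrite IH !xpair_eqE.
have [->|xu] := eqVneq x u.
  rewrite (negbTE uv) /= eqxx.
  by case: (ord2P i) (ord2P k1) (ord2P k2) k12 => -> [] -> [] ->.
have [xv|//] := eqVneq x v; subst x; rewrite /= (negbTE xu).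
by case: (ord2P j) (ord2P k1) (ord2P k2) k12 => -> [] -> [] ->.
Qed.

Lemma filter_twins_fst u k1 k2 s :
  filter (fun z => z.1 == u) (twins k1 k2 s) = twins k1 k2 (filter (pred1 u) s).
Proof. by elim: s => //= x s IH; rewrite IH; case: (x == u). Qed.

Lemma alternating_twins_const u s : all (pred1 u) s ->
  alternating ((u, ord_max) :: twins ord0 ord_max s).
Proof.
elim: s => //= x s IH /andP[/eqP -> /IH].
by rewrite !xpair_eqE eqxx.
Qed.

Lemma alternate_prism_same w u i j :
  u \in w -> i != j -> alternate (prism_word w) (u, i) (u, j).
Proof.
move=> uw ij; rewrite alternateE.
have -> : filter (pred2 (u, i) (u, j)) (prism_word w) =
          filter (fun z => z.1 == u) (prism_word w).
  apply: eq_filter => -[x k] /=; rewrite !xpair_eqE -andb_orr.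
  by case: (x == u); case: (ord2P i) (ord2P j) (ord2P k) ij => -> [] -> [] ->.
have occ_u : filter (pred1 u) (first_occ w) = [:: u].
  by rewrite filter_pred1_uniq ?first_occ_uniq ?mem_first_occ.
rewrite !filter_cat !filter_twins_fst filter_map (eq_filter (a2 := pred1 u)) // occ_u /=.
have w_u := alternating_twins_const (filter_all (pred1 u) w).
case: (filter_behead (pred1 u) (first_occ w)) => ->; rewrite occ_u //=.
by rewrite !xpair_eqE eqxx.
Qed.

Lemma pred2_restrictions w u v : u != v -> u \in w -> v \in w ->
  exists a b t, [/\ b != a, filter (pred2 u v) w = a :: t,
    filter (pred2 u v) (first_occ w) = [:: a; b] &
    let q := filter (pred2 u v) (behead (first_occ w)) in q = [:: a; b] \/ q = [:: b]].
Proof.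
move=> uv uw vw; have : u \in filter (pred2 u v) w by rewrite mem_filter /= eqxx.
case w_uv: filter => [|a t] // _.
have [b ba occ_uv] := filter_pred2_first_occ uv uw vw w_uv.
exists a, b, t; split=> //=.
by case: (filter_behead (pred2 u v) (first_occ w)) => ->; rewrite occ_uv; [left | right].
Qed.

Lemma alternate_prism_level w u v k : u != v -> u \in w -> v \in w ->
  alternate (prism_word w) (u, k) (v, k) = alternate w u v.
Proof.
move=> uv uw vw; have [a [b [t [ba w_uv occ_uv q_ab]]]] := pred2_restrictions uv uw vw.
have ab : a != b by rewrite eq_sym.
have pair_inj : injective (pair^~ k : T -> T * 'I_2) by move=> x y [].
rewrite !alternateE !filter_cat !filter_twins_pair // filter_map w_uv.
have tagE : (fun x => (x, if x == u then k else k)) =1 pair^~ k.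
  by move=> x; rewrite if_same.
have mid : [seq (x, ord_max) | x <- first_occ w &
              preim (pair^~ ord_max) (pred2 (u, k) (v, k)) x] =
           [seq (x, k) | x <- if k == ord_max then [:: a; b] else [::]].
  case: (ord2P k) => ->; [rewrite (eq_filter (a2 := pred0)) ?filter_pred0 //
                         | rewrite (eq_filter (a2 := pred2 u v)) ?occ_uv //];
  by move=> x /=; rewrite !xpair_eqE ?andbF ?eqxx ?andbT.
rewrite !(eq_map tagE) mid -!map_cat alternating_map //.
case: ifP => _ /=; rewrite (alternating_junction ab q_ab) //=.
by rewrite ab eq_sym ab.
Qed.

Lemma alternate_prism_cross w u v : u != v -> u \in w -> v \in w ->
  ~~ alternate (prism_word w) (u, ord0) (v, ord_max).
Proof.
move=> uv uw vw; have [a [b [t [_ w_uv occ_uv q_ab]]]] := pred2_restrictions uv uw vw.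
pose tag x : T * 'I_2 := (x, if x == u then ord0 else ord_max).
have tag_inj : injective tag by move=> x y [].
have mid : [seq (x, ord_max) | x <- first_occ w &
              preim (pair^~ (ord_max : 'I_2)) (pred2 (u, ord0) (v, ord_max)) x] =
           [:: tag v].
  rewrite (eq_filter (a2 := pred1 v)) => [|x /=]; last first.
    by rewrite !xpair_eqE andbF eqxx andbT.
  by rewrite filter_pred1_uniq ?first_occ_uniq ?mem_first_occ //= /tag eq_sym (negbTE uv).
have v_ab : v \in [:: a; b] by rewrite -occ_uv mem_filter /= eqxx orbT mem_first_occ.
rewrite alternateE !filter_cat !filter_twins_pair // filter_map w_uv mid.
rewrite -[[:: tag v] ++ _]/(map tag (v :: a :: t)) -map_cat alternating_map //.
by rewrite (alternating_junction_repeat q_ab _ v_ab).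
Qed.

Lemma alternate_prism_pair w u v i j : u != v -> u \in w -> v \in w ->
  alternate (prism_word w) (u, i) (v, j) = (i == j) && alternate w u v.
Proof.
move=> uv uw vw.
case: (ord2P i) (ord2P j) => -> [] ->; rewrite ?alternate_prism_level //=.
  exact/negbTE/alternate_prism_cross.
by rewrite alternate_sym; apply/negbTE/alternate_prism_cross; rewrite // eq_sym.
Qed.

End PrismWord.

Lemma represents_prism (T : finType) (e : rel T) w : represents e w ->
  represents (cartesian_product e (complete_graph 2)) (prism_word w).
Proof.
move=> [w_full rep_w]; split=> [[x k]|[u i] [v j]]; first exact: mem_prism_word.
rewrite /cartesian_product /complete_graph /=.
have [<- uiuj|uv _] := eqVneq u v.
  have ij : i != j by apply: contra_neq uiuj => ->.
  by rewrite ij; split=> // _; apply: alternate_prism_same.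
by rewrite alternate_prism_pair //; case: (i == j) => //=; apply: rep_w.
Qed.

Lemma min_word_length_le (T : finType) (e : rel T) w : represents e w ->
  exists2 m, is_min_word_length e m & m <= size w.
Proof.
move=> rep_w; pose P n := exists w', represents e w' /\ size w' = n.
have [m [[Pm min_m] _]] := dec_inh_nat_subset_has_unique_least_element P
  (fun n => classic (P n)) (ex_intro P _ (ex_intro _ w (conj rep_w erefl))).
exists m; last by apply/leP/min_m; exists w.
by split=> // w' rep_w'; apply/leP/min_m; exists w'.
Qed.

Theorem mainTheorem4 (T : finType) (e : rel T) :
  simple_graph e -> word_representable e ->
  forall n : nat, is_min_word_length e n ->
  exists m : nat,
    is_min_word_length (cartesian_product e (complete_graph 2)) m /\
    m <= 2 * n + 3 * #|T| - 2.
Proof.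
move=> _ _ n [[w [rep_w <-]] _].
have [m min_m le_m] := min_word_length_le (represents_prism rep_w).
exists m; split=> //.
by rewrite -(size_prism_word (proj1 rep_w)).
Qed.
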